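(* Let $R$ be a diagonally convex polyomino with at least three diagonals, let $m$ be the largest index $n$ such that $R$ has a cell on the $n$-th diagonal, and let $Q$ be the set of cells of $R$ not on the $m$-th diagonal. Then exactly one connected component (under edge-adjacency) of $Q$ has cells on at least two diagonals, this component is a diagonally convex polyomino, and every other connected component of $Q$ consists of a single cell lying on the $(m-1)$-th diagonal.
   Context: A cell is a closed unit square $[i,i+1]\times[j,j+1]$ with $i,j\in\mathbb{Z}$; we identify it with $(i,j)$; two cells are edge-adjacent if they share an edge. A polyomino is a finite nonempty set of cells connected under edge-adjacency. The $n$-th diagonal is the set of cells $(i,j)$ with $i+j=n$. A polyomino is diagonally convex if for every $n$ its cells on the $n$-th diagonal are of the form $(i,n-i)$ with $i$ ranging over an interval of integers. The number of diagonals of a polyomino is the number of $n$ for which it has a cell on the $n$-th diagonal. *)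

From Stdlib Require Import ZArith List Relations.
Open Scope Z_scope.

(* The cell [i,i+1]x[j,j+1] is identified with (i,j). *)
Definition cell : Type := (Z * Z)%type.

Definition cellset : Type := cell -> Prop.

Definition adj (c d : cell) : Prop :=
  Z.abs (fst c - fst d) + Z.abs (snd c - snd d) = 1.

Definition finite_set (S : cellset) : Prop :=
  exists l : list cell, forall c, S c <-> In c l.

Definition adj_in (S : cellset) (c d : cell) : Prop := S c /\ S d /\ adj c d.

Definition connected_in (S : cellset) (c d : cell) : Prop :=
  S c /\ clos_refl_trans cell (adj_in S) c d.

Definition polyomino (S : cellset) : Prop :=
  finite_set S /\ (exists c, S c) /\ (forall c d, S c -> S d -> connected_in S c d).

Definition diag (c : cell) : Z := fst c + snd c.

Definition has_diag (S : cellset) (n : Z) : Prop := exists c, S c /\ diag c = n.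

Definition diag_convex (S : cellset) : Prop :=
  forall n i j k, i <= j <= k -> S (i, n - i) -> S (k, n - k) -> S (j, n - j).

Definition at_least_three_diagonals (S : cellset) : Prop :=
  exists n1 n2 n3, n1 < n2 < n3 /\ has_diag S n1 /\ has_diag S n2 /\ has_diag S n3.

Definition at_least_two_diagonals (S : cellset) : Prop :=
  exists n1 n2, n1 < n2 /\ has_diag S n1 /\ has_diag S n2.

(* The connected component of x in S (meaningful when S x). *)
Definition component (S : cellset) (x : cell) : cellset := fun y => connected_in S x y.

Definition remove_diag (R : cellset) (m : Z) : cellset := fun c => R c /\ diag c <> m.

From Stdlib Require Import ZArith List Relations Lia Classical.
Open Scope Z_scope.

(* The proof singles out the core of R:
   its cells on diagonals <= m-2 together with the cells of diagonal m-1
   having an R-neighbour on diagonal m-2.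
   - The core contains a cell x0 of diagonal m-1: a path in R from a low
     diagonal up to diagonal m must cross from m-2 into m-1.
   - The core is closed under adjacency inside Q, and every core cell is
     Q-connected to x0: along an R-path the only moves leaving the core go
     through diagonal m, and those are bypassed by a staircase along
     diagonals m-1 / m-2 (which exists by diagonal convexity of R).
     Hence the component of x0 in Q is exactly the core.
   - The core is diagonally convex, and a cell of Q outside the core lies on
     diagonal m-1 and has no neighbour in Q, so it is an isolated cell. *)

Lemma adj_sym (c d : cell) : adj c d -> adj d c.
Proof. destruct c, d; unfold adj; simpl; lia. Qed.

Lemma adj_diag (c d : cell) : adj c d -> diag d = diag c + 1 \/ diag d = diag c - 1.
Proof. destruct c, d; unfold adj, diag; simpl; lia. Qed.

Lemma finite_subset (l : list cell) (S : cellset) :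
  (forall c, S c -> In c l) -> finite_set S.
Proof.
  revert S; induction l as [|a l IH]; intros S H.
  - exists nil. intros c; split; [apply H | intros []].
  - destruct (IH (fun c => S c /\ c <> a)) as [l0 Hl0].
    { intros c [Hc Hne]. destruct (H c Hc); [congruence | assumption]. }
    destruct (classic (S a)) as [Sa | nSa].
    + exists (a :: l0). intros c; split.
      * intros Hc. destruct (classic (c = a)); [left; auto | right; apply Hl0; auto].
      * intros [<- | Hc]; [assumption | apply Hl0 in Hc; tauto].
    + exists l0. intros c; split.
      * intros Hc. apply Hl0. split; [assumption | intros ->; contradiction].
      * intros Hc; apply Hl0 in Hc; tauto.
Qed.

Section Paths.
Variable S : cellset.

Lemma path_invariant (P : cell -> Prop) :
  (forall c d, P c -> adj_in S c d -> P d) ->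
  forall a b, clos_refl_trans cell (adj_in S) a b -> P a -> P b.
Proof. intros HP a b H; induction H; eauto. Qed.

Lemma path_sym (a b : cell) :
  clos_refl_trans cell (adj_in S) a b -> clos_refl_trans cell (adj_in S) b a.
Proof.
  intros H; induction H as [a b [Ha [Hb Hab]] | | ]; eauto using rt_refl, rt_trans.
  apply rt_step. repeat split; auto using adj_sym.
Qed.

Lemma connected_refl (a : cell) : S a -> connected_in S a a.
Proof. split; [assumption | apply rt_refl]. Qed.

Lemma connected_mem (a b : cell) : connected_in S a b -> S b.
Proof.
  intros [Ha H]. apply (path_invariant S) with a; auto.
  intros c d _ [_ [Hd _]]; exact Hd.
Qed.

Lemma connected_sym (a b : cell) : connected_in S a b -> connected_in S b a.
Proof. intros H. split; [exact (connected_mem a b H) | apply path_sym, H]. Qed.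

Lemma connected_trans (a b c : cell) :
  connected_in S a b -> connected_in S b c -> connected_in S a c.
Proof. intros [Ha H1] [_ H2]. split; [assumption | eapply rt_trans; eauto]. Qed.

Lemma connected_step (a b c : cell) :
  connected_in S a b -> adj_in S b c -> connected_in S a c.
Proof. intros [Ha H1] H2. split; [assumption | eapply rt_trans; eauto using rt_step]. Qed.

Lemma path_in_component (x c d : cell) :
  connected_in S x c -> clos_refl_trans cell (adj_in S) c d ->
  clos_refl_trans cell (adj_in (component S x)) c d.
Proof.
  intros Hc H; revert Hc; induction H as [c d Hcd | | c e d Hce IH1 _ IH2]; intros Hc.
  - apply rt_step. split; [exact Hc|]. split; [eapply connected_step; eauto | apply Hcd].
  - apply rt_refl.
  - apply rt_trans with e; [apply IH1, Hc | apply IH2].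
    apply connected_trans with c; [exact Hc | split; [exact (connected_mem x c Hc) | exact Hce]].
Qed.

Lemma component_connected (x c d : cell) :
  component S x c -> component S x d -> connected_in (component S x) c d.
Proof.
  intros Hc Hd. split; [exact Hc|]. apply (path_in_component x c d Hc).
  apply (connected_trans c x d); [apply connected_sym|]; assumption.
Qed.

End Paths.

Definition dcell (n i : Z) : cell := (i, n - i).

Definition core (R : cellset) (m : Z) (c : cell) : Prop :=
  R c /\ (diag c <= m - 2 \/ exists w, R w /\ diag w = m - 2 /\ adj c w).

Section Core.
Variables (R : cellset) (m : Z).
Hypothesis Hdc : diag_convex R.
Hypothesis Hmax : forall c, R c -> diag c <= m.
Hypothesis Hconn : forall c d, R c -> R d -> connected_in R c d.

Local Notation Q := (remove_diag R m).

Lemma core_low (c : cell) : R c -> diag c <= m - 2 -> core R m c.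
Proof. intros Rc Hc. split; [exact Rc | left; exact Hc]. Qed.

Lemma core_diag_le (c : cell) : core R m c -> diag c <= m - 1.
Proof. intros [_ [H | [w [_ [Hw Hcw]]]]]; [lia | destruct (adj_diag _ _ Hcw); lia]. Qed.

Lemma core_remove (c : cell) : core R m c -> Q c.
Proof. intros Hc. split; [apply Hc | pose proof (core_diag_le c Hc); lia]. Qed.

Lemma remove_diag_le (c : cell) : Q c -> diag c <= m - 1.
Proof. intros [Rc Hc]. pose proof (Hmax c Rc); lia. Qed.

Lemma core_top_witness (i : Z) :
  core R m (dcell (m - 1) i) -> exists t, i - 1 <= t <= i /\ R (dcell (m - 2) t).
Proof.
  intros [_ [H | [[wx wy] [Rw [Dw A]]]]]; unfold adj, dcell, diag in *; simpl in *; [lia|].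
  exists wx. replace wy with (m - 2 - wx) in Rw by lia. split; [lia | exact Rw].
Qed.

Lemma core_top_intro (i t : Z) :
  R (dcell (m - 1) i) -> R (dcell (m - 2) t) -> i - 1 <= t <= i ->
  core R m (dcell (m - 1) i).
Proof.
  intros Ri Rt Hit. split; [exact Ri|]. right. exists (dcell (m - 2) t).
  unfold dcell, diag, adj; simpl. split; [exact Rt | split; lia].
Qed.

Lemma core_top_interval (i j k : Z) : i <= j <= k ->
  core R m (dcell (m - 1) i) -> core R m (dcell (m - 1) k) ->
  core R m (dcell (m - 1) j).
Proof.
  intros Hijk Ci Ck.
  destruct (core_top_witness i Ci) as [ti [Hti Rti]].
  destruct (core_top_witness k Ck) as [tk [Htk Rtk]].
  assert (Rj : R (dcell (m - 1) j)) by (apply (Hdc (m - 1) i j k); [lia | apply Ci | apply Ck]).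
  destruct (Z_le_gt_dec j tk).
  - apply core_top_intro with j; [exact Rj | apply (Hdc (m - 2) ti j tk); auto; lia | lia].
  - apply core_top_intro with tk; [exact Rj | exact Rtk | lia].
Qed.

(* Core cells of diagonal m-1 at distance n are joined in Q by the staircase
   (i, m-1-i), (i, m-2-i), (i+1, m-2-i), ... *)
Lemma core_top_staircase (n : nat) (i : Z) :
  core R m (dcell (m - 1) i) -> core R m (dcell (m - 1) (i + Z.of_nat n)) ->
  connected_in Q (dcell (m - 1) i) (dcell (m - 1) (i + Z.of_nat n)).
Proof.
  revert i; induction n as [|n IH]; intros i Ci Ck.
  - rewrite Z.add_0_r. apply connected_refl, core_remove, Ci.
  - replace (i + Z.of_nat (S n)) with ((i + 1) + Z.of_nat n) in * by lia.
    assert (Ci1 : core R m (dcell (m - 1) (i + 1))) by (apply core_top_interval with i (i + 1 + Z.of_nat n); auto; lia).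
    destruct (core_top_witness i Ci) as [ti [Hti Rti]].
    destruct (core_top_witness _ Ck) as [tk [Htk Rtk]].
    assert (Rw : R (dcell (m - 2) i)) by (apply (Hdc (m - 2) ti i tk); auto; lia).
    assert (Qw : Q (dcell (m - 2) i)) by (split; [exact Rw | unfold dcell, diag; simpl; lia]).
    apply connected_trans with (dcell (m - 1) (i + 1)); [|apply IH; auto].
    apply connected_step with (dcell (m - 2) i).
    + apply connected_step with (dcell (m - 1) i); [apply connected_refl, core_remove, Ci|].
      split; [apply core_remove, Ci | split; [exact Qw | unfold adj, dcell; simpl; lia]].
    + split; [exact Qw | split; [apply core_remove, Ci1 | unfold adj, dcell; simpl; lia]].
Qed.

Lemma core_top_connected (c d : cell) : core R m c -> core R m d ->
  diag c = m - 1 -> diag d = m - 1 -> connected_in Q c d.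
Proof.
  destruct c as [i ci], d as [k dk]; unfold diag; simpl; intros Cc Cd Dc Dd.
  replace ci with (m - 1 - i) in * by lia; replace dk with (m - 1 - k) in * by lia.
  change (connected_in Q (dcell (m - 1) i) (dcell (m - 1) k)).
  destruct (Z.le_ge_cases i k).
  - replace k with (i + Z.of_nat (Z.to_nat (k - i))) in * by lia.
    apply core_top_staircase; assumption.
  - apply connected_sym. replace i with (k + Z.of_nat (Z.to_nat (i - k))) in * by lia.
    apply core_top_staircase; assumption.
Qed.

Lemma core_closed (c d : cell) : core R m c -> adj_in Q c d -> core R m d.
Proof.
  intros Cc [_ [[Rd Dd] Hcd]]. pose proof (core_diag_le c Cc).
  destruct (Z_le_gt_dec (diag d) (m - 2)); [apply core_low; assumption|].
  destruct (adj_diag c d Hcd); [|lia].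
  split; [exact Rd | right]. exists c. split; [apply Cc | split; [lia | apply adj_sym, Hcd]].
Qed.

Lemma core_entry (a d : cell) : adj_in R a d -> core R m d ->
  core R m a \/ (diag a = m /\ diag d = m - 1).
Proof.
  intros [Ra [Rd Had]] Cd.
  pose proof (Hmax a Ra); pose proof (Hmax d Rd); pose proof (core_diag_le d Cd).
  destruct (Z_le_gt_dec (diag a) (m - 2)); [left; apply core_low; assumption|].
  destruct (Z.eq_dec (diag a) m); [right; destruct (adj_diag a d Had); lia|].
  left. split; [exact Ra | right]. exists d.
  split; [exact Rd | split; [destruct (adj_diag a d Had); lia | exact Had]].
Qed.

Lemma core_top_exists (a b : cell) : clos_refl_trans cell (adj_in R) a b ->
  diag a <= m - 2 -> m - 1 <= diag b -> exists x, core R m x /\ diag x = m - 1.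
Proof.
  intros Hab Ha Hb.
  pose (P c := diag c <= m - 2 \/ exists x, core R m x /\ diag x = m - 1).
  assert (HPb : P b); [|destruct HPb; [lia | assumption]].
  apply (path_invariant R P) with a; [|exact Hab | left; exact Ha].
  unfold P.
  intros c d [Hc | Hex] [Rc [Rd Hcd]]; [|right; exact Hex].
  destruct (Z_le_gt_dec (diag d) (m - 2)); [left; assumption|].
  right. exists d. destruct (adj_diag c d Hcd); [|lia].
  split; [|lia]. split; [exact Rd | right]. exists c.
  split; [exact Rc | split; [lia | apply adj_sym, Hcd]].
Qed.

Lemma core_connected (x0 c : cell) : core R m x0 -> diag x0 = m - 1 ->
  core R m c -> connected_in Q x0 c.
Proof.
  intros Cx0 Dx0 Cc. destruct (Hconn x0 c (proj1 Cx0) (proj1 Cc)) as [_ Hpath].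
  revert Cc. apply (path_invariant R (fun c => core R m c -> connected_in Q x0 c)) with x0.
  - intros a d IH Had Cd. destruct (core_entry a d Had Cd) as [Ca | [Da Dd]].
    + apply connected_step with a; [apply IH, Ca|].
      split; [apply core_remove, Ca | split; [apply core_remove, Cd | apply Had]].
    + apply core_top_connected; assumption.
  - exact Hpath.
  - intros _. apply connected_refl, core_remove, Cx0.
Qed.

Lemma component_core (x0 : cell) : core R m x0 -> diag x0 = m - 1 ->
  forall c, component Q x0 c <-> core R m c.
Proof.
  intros Cx0 Dx0 c. split.
  - intros [_ Hpath]. apply (path_invariant Q (core R m)) with x0; auto.
    intros a d Ca Had. apply core_closed with a; assumption.
  - apply core_connected; assumption.
Qed.

(* The core is diagonally convex: below m-1 by convexity of R, on m-1 by
   core_top_interval. *)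
Lemma core_diag_convex : diag_convex (core R m).
Proof.
  intros n i j k Hijk Ci Ck.
  assert (Rj : R (j, n - j)) by (apply (Hdc n i j k); [exact Hijk | apply Ci | apply Ck]).
  pose proof (core_diag_le _ Ci) as Hn; unfold diag in Hn; simpl in Hn.
  destruct (Z_le_gt_dec n (m - 2)).
  - apply core_low; [exact Rj | unfold diag; simpl; lia].
  - assert (n = m - 1) by lia; subst n. apply core_top_interval with i k; assumption.
Qed.

Lemma noncore_isolated (y : cell) : Q y -> ~ core R m y ->
  (forall z, connected_in Q y z -> z = y) /\ diag y = m - 1.
Proof.
  intros Qy nCy.
  assert (Dy : diag y = m - 1).
  { pose proof (remove_diag_le y Qy). destruct (Z_le_gt_dec (diag y) (m - 2)); [|lia].
    exfalso. apply nCy, core_low; [apply Qy | assumption]. }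
  split; [|exact Dy].
  intros z [_ Hpath]. apply (path_invariant Q (fun z => z = y)) with y; auto.
  intros c d -> [_ [Qd Hyd]]. exfalso. apply nCy.
  pose proof (remove_diag_le d Qd). destruct Qd as [Rd Dd].
  split; [apply Qy | right]. exists d.
  split; [exact Rd | split; [destruct (adj_diag y d Hyd); lia | exact Hyd]].
Qed.

End Core.

Theorem mainTheorem3 (R : cellset) (m : Z)
  (HR : polyomino R) (Hdc : diag_convex R) (H3 : at_least_three_diagonals R)
  (Hm : has_diag R m) (Hmax : forall c, R c -> diag c <= m) :
  let Q := remove_diag R m in
  exists x0, Q x0 /\
    (* the component of x0 has cells on at least two diagonals ... *)
    at_least_two_diagonals (component Q x0) /\
    (* ... and it is the only such component *)
    (forall y, Q y -> at_least_two_diagonals (component Q y) ->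
       connected_in Q x0 y) /\
    (* it is a diagonally convex polyomino *)
    polyomino (component Q x0) /\ diag_convex (component Q x0) /\
    (* every other component is a single cell on diagonal m-1 *)
    (forall y, Q y -> ~ connected_in Q x0 y ->
       (forall z, component Q y z -> z = y) /\ diag y = m - 1).
Proof.
  intros Q; subst Q.
  destruct HR as [[lR HlR] [_ Hconn]].
  assert (Hx0 : exists x0, core R m x0 /\ diag x0 = m - 1).
  { destruct H3 as [n1 [n2 [n3 [Hn [[u [Ru Hu]] [_ [u3 [Ru3 Hu3]]]]]]]].
    destruct Hm as [v [Rv Hv]]. pose proof (Hmax u3 Ru3).
    apply core_top_exists with u v; [apply (Hconn u v Ru Rv) | lia | lia]. }
  destruct Hx0 as [x0 [Cx0 Dx0]].
  pose proof (component_core R m Hdc Hmax Hconn x0 Cx0 Dx0) as Hcomp.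
  exists x0. split; [apply core_remove, Cx0|]. split; [|split; [|split; [|split]]].
  - destruct Cx0 as [Rx0 [Hlow | [w [Rw [Dw Hw]]]]]; [lia|].
    exists (m - 2), (m - 1). split; [lia|]. split.
    + exists w. split; [apply Hcomp, core_low; [exact Rw | lia] | exact Dw].
    + exists x0. split; [apply Hcomp; split; [exact Rx0 | right; exists w; auto] | exact Dx0].
  - intros y Qy [n1 [n2 [Hn [[z1 [Hz1 D1]] [z2 [Hz2 D2]]]]]].
    destruct (classic (core R m y)) as [Cy | nCy]; [apply Hcomp, Cy|].
    destruct (noncore_isolated R m Hmax y Qy nCy) as [Hiso _].
    rewrite (Hiso z1 Hz1) in D1; rewrite (Hiso z2 Hz2) in D2; lia.
  - split; [|split].
    + apply finite_subset with lR. intros c Hc. apply HlR, (Hcomp c), Hc.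
    + exists x0. apply Hcomp, Cx0.
    + intros c d. apply component_connected.
  - intros n i j k Hijk Hi Hk. apply Hcomp.
    apply (core_diag_convex R m Hdc n i j k Hijk); apply Hcomp; assumption.
  - intros y Qy Hny. apply noncore_isolated; [exact Hmax | exact Qy |].
    intros Cy. apply Hny, Hcomp, Cy.
Qed.
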